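(* Let $t$ be a positive integer and let $G$ be a graph on $4t-1$ vertices with $\alpha(G)=2$ and $\mathrm{cm}(G)\le t-1$. For any disjoint subsets $A,B\subseteq V(G)$ with $|A|\le |B|=t-1$, the bipartite subgraph $H$ of $G$ formed by the edges of $G$ between $A$ and $B$ contains a matching of size $|A|$.
   Context: All graphs are finite and simple. $\alpha(G)$ is the independence number. A matching $M$ in $G$ is connected if for every two edges of $M$ there is an edge of $G$ joining an endpoint of one to an endpoint of the other; $\mathrm{cm}(G)$ is the maximum size of a connected matching in $G$. *)

From mathcomp Require Import all_boot.
Set Implicit Arguments. Unset Strict Implicit. Unset Printing Implicit Defensive.

Definition simple_graph (T : finType) (e : rel T) : Prop :=
  symmetric e /\ irreflexive e.

Definition is_edge (T : finType) (e : rel T) (f : {set T}) : bool :=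
  [exists x, exists y, (f == [set x; y]) && e x y].

Definition independent (T : finType) (e : rel T) (S : {set T}) : bool :=
  [forall x in S, forall y in S, ~~ e x y].

Definition alpha (T : finType) (e : rel T) : nat :=
  \max_(S : {set T} | independent e S) #|S|.

Definition matching (T : finType) (e : rel T) (M : {set {set T}}) : bool :=
  [forall f in M, is_edge e f] &&
  [forall f1 in M, forall f2 in M, (f1 != f2) ==> [disjoint f1 & f2]].

Definition connected_matching (T : finType) (e : rel T) (M : {set {set T}}) : bool :=
  matching e M &&
  [forall f1 in M, forall f2 in M,
     (f1 != f2) ==> [exists x in f1, exists y in f2, e x y]].

Definition cm (T : finType) (e : rel T) : nat :=
  \max_(M : {set {set T}} | connected_matching e M) #|M|.

From mathcomp Require Import all_boot zify.
Set Implicit Arguments. Unset Strict Implicit. Unset Printing Implicit Defensive.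

(* If Hall's condition fails for some S in A, let X := S and let Y be B minus
   the neighbours of S. There are no edges between X and Y, each has at most
   t - 1 vertices, together they have at least t, and alpha = 2 makes both of
   them cliques.
   Since cm <= t - 1, Hall's condition must fail for every t-set that could be
   matched into the rest of the graph by a connected matching. Applied to
   cliques, this bounds every clique, hence every non-neighbourhood, by t - 1.
   Applied to X together with t - |X| vertices of Y, the latter allowed to be
   matched only to common neighbours of X, it shows that at least
   2t + 1 + |X| - |Y| vertices outside X u Y miss some vertex of X; and
   symmetrically for Y. As alpha = 2, no vertex misses both a vertex of X and
   one of Y, so 4t + 2 vertices would have to fit among the
   4t - 1 - |X| - |Y| vertices outside X u Y. *)

Lemma exists_subset_card (T : finType) (A : {set T}) n :
  n <= #|A| -> exists2 B : {set T}, B \subset A & #|B| = n.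
Proof.
elim: n => [|n IHn] le_nA; first by exists set0; rewrite ?sub0set ?cards0.
have [B BA cardB] := IHn (ltnW le_nA).
have /card_gt0P[a] : 0 < #|A :\: B| by rewrite cardsDS //; lia.
rewrite inE => /andP[aB aA].
by exists (a |: B); rewrite ?subUset ?sub1set ?aA ?BA // cardsU1 aB cardB.
Qed.

Section Hall.
Variables (T : finType) (r : rel T).
Implicit Types (L R S : {set T}) (f g : T -> T).

Definition nbh R S := [set y in R | [exists x in S, r x y]].

Definition matching_map L R f :=
  {in L &, injective f} /\ {in L, forall x, f x \in R /\ r x (f x)}.

Definition hall_condition L R := forall S, S \subset L -> #|S| <= #|nbh R S|.

Lemma mem_nbh R S x y : x \in S -> y \in R -> r x y -> y \in nbh R S.
Proof. by move=> xS yR rxy; rewrite inE yR; apply/existsP; exists x; rewrite xS. Qed.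

Lemma nbh_sub R S : nbh R S \subset R.
Proof. by apply/subsetP => y; rewrite inE => /andP[]. Qed.

Lemma nbhU R S1 S2 : nbh R (S1 :|: S2) = nbh R S1 :|: nbh R S2.
Proof.
apply/setP => y; rewrite !inE -andb_orr; congr (_ && _).
apply/existsP/orP => [[x /andP[]]|[]/existsP[x /andP[xS rxy]]].
- by rewrite inE => /orP[] xS rxy; [left | right]; apply/existsP; exists x; rewrite xS.
- by exists x; rewrite inE xS.
- by exists x; rewrite inE xS orbT.
Qed.

Lemma nbh_setD R R' S : nbh (R :\: R') S = nbh R S :\: R'.
Proof. by apply/setP => y; rewrite !inE andbA. Qed.

Lemma hall_condition_sub L R S0 :
  S0 \subset L -> hall_condition L R -> hall_condition S0 R.
Proof. by move=> S0L hallLR S SS0; apply/hallLR/(subset_trans SS0). Qed.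

Lemma hall_condition_tight L R S0 :
    S0 \subset L -> hall_condition L R -> #|nbh R S0| <= #|S0| ->
  hall_condition (L :\: S0) (R :\: nbh R S0).
Proof.
move=> S0L hallLR tightS0 S; rewrite subsetD => /andP[SL dSS0].
have := hallLR (S :|: S0); rewrite subUset SL S0L nbhU => /(_ isT).
rewrite nbh_setD cardsU (disjoint_setI0 dSS0) cards0 subn0.
have := cardsUI (nbh R S) (nbh R S0); have := cardsD (nbh R S) (nbh R S0).
lia.
Qed.

Lemma hall_condition_slack L R x0 y0 :
    (forall S, S \subset L -> S != set0 -> S != L -> #|S| < #|nbh R S|) ->
    x0 \in L -> hall_condition (L :\ x0) (R :\ y0).
Proof.
move=> slack x0L S; rewrite subsetD1 => /andP[SL x0S].
have [-> | S_neq0] := eqVneq S set0; first by rewrite cards0.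
have S_neqL : S != L by apply: contraNneq x0S => ->.
have := slack S SL S_neq0 S_neqL.
by rewrite nbh_setD (cardsD1 y0 (nbh R S)); case: (y0 \in nbh R S) => /=; lia.
Qed.

Lemma matching_map_nbh L R f : matching_map L R f -> matching_map L (nbh R L) f.
Proof.
case=> f_inj f_map; split=> // x xL.
by have [fxR rxfx] := f_map x xL; rewrite (mem_nbh xL fxR rxfx).
Qed.

Lemma matching_map_glue L R S0 R0 f g :
    S0 \subset L -> R0 \subset R ->
    matching_map S0 R0 f -> matching_map (L :\: S0) (R :\: R0) g ->
  matching_map L R (fun x => if x \in S0 then f x else g x).
Proof.
move=> S0L R0R [f_inj f_map] [g_inj g_map].
have g_out x : x \in L -> x \notin S0 -> g x \notin R0.
  by move=> xL xS0; have [] := g_map x; rewrite ?inE ?xS0 // => /andP[].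
split=> [x y xL yL | x xL].
  case: ifP => xS0; case: ifP => yS0.
  - exact: f_inj.
  - by move=> fgxy; have := g_out y yL; rewrite yS0 -fgxy (f_map x xS0).1 => /(_ isT).
  - by move=> gfxy; have := g_out x xL; rewrite xS0 gfxy (f_map y yS0).1 => /(_ isT).
  - by apply: g_inj; rewrite inE ?xS0 ?yS0.
case: ifP => xS0; first by have [/(subsetP R0R)] := f_map x xS0.
by have [] := g_map x; rewrite ?inE ?xS0 // => /andP[_ ->].
Qed.

(* Either some proper nonempty S0 is tight, and S0 and L :\: S0 are matched
   separately, or every such set has slack, and any edge x0 y0 may be used. *)
Theorem hall L R : hall_condition L R -> exists f, matching_map L R f.
Proof.
move: {2}#|L| (leqnn #|L|) => n; elim: n L R => [|n IHn] L R le_Ln hallLR.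
  move: le_Ln; rewrite leqn0 cards_eq0 => /eqP ->.
  by exists id; split=> [x y|x]; rewrite inE.
case: (boolP [exists S0 : {set T},
  [&& S0 \subset L, S0 != set0, S0 != L & #|nbh R S0| <= #|S0|]]).
  case/existsP => S0 /and4P[S0L S0_neq0 S0_neqL tightS0].
  have ltS0 : #|S0| < #|L| by rewrite proper_card // properEneq S0_neqL.
  have S0_gt0 : 0 < #|S0| by rewrite card_gt0.
  have [f mf] := IHn S0 R (ltac:(lia)) (hall_condition_sub S0L hallLR).
  have [g mg] := IHn (L :\: S0) (R :\: nbh R S0)
    (ltac:(rewrite cardsDS //; lia)) (hall_condition_tight S0L hallLR tightS0).
  exists (fun x => if x \in S0 then f x else g x).
  exact: matching_map_glue S0L (nbh_sub _ _) (matching_map_nbh mf) mg.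
move/existsPn => no_tight.
have [-> | [x0 x0L]] := set_0Vmem L.
  by exists id; split=> [x y|x]; rewrite inE.
have /card_gt0P[y0] : 0 < #|nbh R [set x0]|.
  by have := hallLR [set x0]; rewrite sub1set x0L cards1 => /(_ isT).
rewrite inE => /andP[y0R /existsP[_ /andP[/set1P -> rx0y0]]].
have slack S : S \subset L -> S != set0 -> S != L -> #|S| < #|nbh R S|.
  by move=> SL S_neq0 S_neqL; have := no_tight S; rewrite SL S_neq0 S_neqL ltnNge.
have [g mg] := IHn (L :\ x0) (R :\ y0)
  (ltac:(have := cardsD1 x0 L; rewrite x0L; lia)) (hall_condition_slack y0 slack x0L).
have my0 : matching_map [set x0] [set y0] (fun=> y0).
  by split=> [x y /set1P-> /set1P->|x /set1P->]; rewrite ?set11.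
exists (fun x => if x \in [set x0] then y0 else g x).
by apply: matching_map_glue _ _ my0 mg; rewrite sub1set.
Qed.

Lemma hall_or_deficient L R :
  (exists f, matching_map L R f) \/ (exists2 S : {set T}, S \subset L & #|nbh R S| < #|S|).
Proof.
case: (boolP [exists S : {set T}, (S \subset L) && (#|nbh R S| < #|S|)]).
  by case/existsP => S /andP[SL defS]; right; exists S.
move/existsPn => no_def; left; apply: hall => S SL.
by have := no_def S; rewrite SL -leqNgt.
Qed.

End Hall.

Section ConnectedMatchings.
Variables (T : finType) (e : rel T).
Implicit Types (K L R S : {set T}) (f : T -> T).

Definition map_edges f L : {set {set T}} := [set [set x; f x] | x in L].

Lemma matching_map_notin L R f x :
  [disjoint L & R] -> matching_map e L R f -> x \in L -> f x \notin L.
Proof. by move=> dLR [_ f_map] xL; rewrite (disjointFl dLR (f_map x xL).1). Qed.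

Lemma map_edges_matching L R f :
  [disjoint L & R] -> matching_map e L R f -> matching e (map_edges f L).
Proof.
move=> dLR mf; have [f_inj f_map] := mf.
apply/andP; split.
  apply/forall_inP => _ /imsetP[x xL ->].
  by apply/existsP; exists x; apply/existsP; exists (f x); rewrite eqxx (f_map x xL).2.
apply/forall_inP => _ /imsetP[x xL ->]; apply/forall_inP => _ /imsetP[y yL ->].
apply/implyP => neq_xy; have xy : x != y by apply: contraNneq neq_xy => ->.
rewrite -setI_eq0; apply/eqP/setP => u; rewrite !inE.
apply/negbTE/negP => /andP[/orP[]/eqP-> /orP[]].
- by rewrite (negbTE xy).
- by move/eqP=> xfy; have := matching_map_notin dLR mf yL; rewrite -xfy xL.
- by move/eqP=> fxy; have := matching_map_notin dLR mf xL; rewrite fxy yL.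
- by move/eqP/f_inj => /(_ xL yL) /eqP; rewrite (negbTE xy).
Qed.

Lemma card_map_edges L R f :
  [disjoint L & R] -> matching_map e L R f -> #|map_edges f L| = #|L|.
Proof.
move=> dLR mf; rewrite card_in_imset // => x y xL yL eq_xy.
have : x \in [set y; f y] by rewrite -eq_xy set21.
rewrite !inE => /orP[/eqP // | /eqP xfy].
by have := matching_map_notin dLR mf yL; rewrite -xfy xL.
Qed.

Lemma map_edges_connected L R f :
    [disjoint L & R] -> matching_map e L R f ->
    {in L &, forall x y, x != y -> [|| e x y, e x (f y), e (f x) y | e (f x) (f y)]} ->
  connected_matching e (map_edges f L).
Proof.
move=> dLR mf f_conn; rewrite /connected_matching (map_edges_matching dLR mf).
apply/forall_inP => _ /imsetP[x xL ->]; apply/forall_inP => _ /imsetP[y yL ->].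
apply/implyP => neq_xy; have xy : x != y by apply: contraNneq neq_xy => ->.
have edge_between u v : u \in [set x; f x] -> v \in [set y; f y] -> e u v ->
    [exists u in [set x; f x], exists v in [set y; f y], e u v].
  by move=> uF vF euv; apply/exists_inP; exists u => //; apply/exists_inP; exists v.
by case/or4P: (f_conn x y xL yL xy) => /edge_between; apply; rewrite ?set21 ?set22.
Qed.

Lemma deficient_of_cm_lt (r : rel T) L R :
    [disjoint L & R] -> subrel r e ->
    {in L &, forall x y, x != y -> forall u v, r x u -> r y v ->
       [|| e x y, e x v, e u y | e u v]} ->
    cm e < #|L| -> exists2 S : {set T}, S \subset L & #|nbh r R S| < #|S|.
Proof.
move=> dLR r_e r_conn cm_lt.
have [[f [f_inj f_map]] | //] := hall_or_deficient r L R.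
have mf : matching_map e L R f.
  by split=> // x /f_map[fxR /r_e]; split.
suff : #|L| <= cm e by rewrite leqNgt cm_lt.
rewrite -(card_map_edges dLR mf); apply: leq_bigmax_cond.
apply: map_edges_connected dLR mf _ => x y xL yL xy.
exact: r_conn xL yL xy _ _ (f_map x xL).2 (f_map y yL).2.
Qed.

Definition clique K := {in K &, forall x y, x != y -> e x y}.

Lemma cliqueS K K' : K' \subset K -> clique K -> clique K'.
Proof. by move=> sK'K cK x y /(subsetP sK'K) xK /(subsetP sK'K); apply: cK. Qed.

Lemma clique_deficient L R :
    clique L -> [disjoint L & R] -> cm e < #|L| ->
  exists2 S : {set T}, S \subset L & #|nbh e R S| < #|S|.
Proof.
move=> cL dLR; apply: deficient_of_cm_lt dLR (fun _ _ => id) _.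
by move=> x y xL yL xy u v _ _; rewrite cL.
Qed.

Lemma card_clique_le_cm K : clique K -> #|K| <= (cm e).*2.+1.
Proof.
move=> cK; rewrite leqNgt; apply/negP => K_gt.
have [L LK cardL] := exists_subset_card (ltac:(lia) : (cm e).+1 <= #|K|).
have dL : [disjoint L & K :\: L] by rewrite disjoint_sym disjoints_subset setDE subsetIr.
have [S SL defS] := clique_deficient (cliqueS LK cK) dL (ltac:(lia)).
have /card_gt0P[s sS] : 0 < #|S| by apply: leq_ltn_trans defS.
have sL := subsetP SL s sS.
have : K :\: L \subset nbh e (K :\: L) S.
  apply/subsetP => w wKL; apply: (mem_nbh sS wKL).
  move: wKL; rewrite inE => /andP[wL wK]; apply: cK (subsetP LK s sL) wK _.
  by apply: contraNneq wL => <-.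
move/subset_leq_card; rewrite cardsDS //.
have := subset_leq_card SL; lia.
Qed.

End ConnectedMatchings.

Section IndependenceNumberTwo.
Variables (T : finType) (e : rel T).
Hypotheses (e_sym : symmetric e) (e_irr : irreflexive e) (alpha_le2 : alpha e <= 2).
Implicit Types (K X Y : {set T}).

Definition non_nbh (v : T) : {set T} := [set u | (u != v) && ~~ e v u].

Definition common_nbh X : {set T} := [set p | [forall x in X, e x p]].

Lemma edge_in_triple x y z : x != y -> x != z -> y != z -> [|| e x y, e x z | e y z].
Proof.
move=> xy xz yz; apply/negPn/negP; rewrite !negb_or => /and3P[exy exz eyz].
have indep : independent e [set x; y; z].
  apply/forall_inP => u uS; apply/forall_inP => v vS.
  move: uS vS; rewrite !inE => /orP[/orP[]|] /eqP-> /orP[/orP[]|] /eqP->;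
  by rewrite ?e_irr // ?exy ?exz ?eyz // e_sym ?exy ?exz ?eyz.
have card3 : #|[set x; y; z]| = 3.
  rewrite [[set x; y; z]](_ : _ = x |: (y |: [set z])); last first.
    by apply/setP => w; rewrite !inE orbA.
  by rewrite !cardsU1 cards1 !inE (negbTE xy) (negbTE xz) (negbTE yz).
have : #|[set x; y; z]| <= alpha e by apply: leq_bigmax_cond.
by rewrite card3; lia.
Qed.

Lemma clique_non_nbh v : clique e (non_nbh v).
Proof.
move=> x y; rewrite !inE => /andP[xv evx] /andP[yv evy] xy.
have vx : v != x by rewrite eq_sym.
have vy : v != y by rewrite eq_sym.
by have := edge_in_triple vx vy xy; rewrite (negbTE evx) (negbTE evy).
Qed.

Variable c : nat.
Hypotheses (cm_le : cm e <= c) (card_T : 4 * c + 3 <= #|T|).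

(* A deficient subset S of a (c+1)-subclique L leaves at least 2c + 2 vertices
   outside L non-adjacent to a vertex of S; they form a clique. *)
Lemma card_clique_le K : clique e K -> #|K| <= c.
Proof.
move=> cK; rewrite leqNgt; apply/negP => K_gt.
have [L LK cardL] := exists_subset_card (ltac:(lia) : c.+1 <= #|K|).
have dL : [disjoint L & ~: L] by rewrite disjoints_subset setCK.
have [S SL defS] := clique_deficient (cliqueS LK cK) dL (ltac:(lia)).
have /card_gt0P[z zS] : 0 < #|S| by apply: leq_ltn_trans defS.
set W := ~: L :\: nbh e (~: L) S.
have W_non_nbh : W \subset non_nbh z.
  apply/subsetP => w; rewrite inE => /andP[wN wL]; rewrite inE; apply/andP; split.
    by apply: contraTneq wL => ->; rewrite inE negbK (subsetP SL z zS).
  by apply: contra wN; apply: mem_nbh zS wL.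
have := card_clique_le_cm (cliqueS W_non_nbh (clique_non_nbh (v := z))).
rewrite /W cardsDS ?nbh_sub //.
have := cardsC L; have := subset_leq_card SL; lia.
Qed.

Lemma card_non_nbh_le v : #|non_nbh v| <= c.
Proof. exact/card_clique_le/clique_non_nbh. Qed.

Section AnticompleteCliques.
Variables X Y : {set T}.
Hypotheses (dXY : [disjoint X & Y]) (XY_anti : {in X & Y, forall x y, ~~ e x y}).
Hypotheses (cX : clique e X) (cY : clique e Y).

Let R := ~: (X :|: Y).
Let P := common_nbh X.

(* Edges leaving Y may only end in common neighbours of X: this is what makes
   every matching of a subset of X :|: Y along [link] connected. *)
Let link u w := e u w && ((u \in X) || (w \in P)).

Lemma link_connected :
  {in X :|: Y &, forall x y, x != y -> forall u v, link x u -> link y v ->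
     [|| e x y, e x v, e u y | e u v]}.
Proof.
move=> x y; rewrite !inE => xXY yXY xy u v /andP[_ xXuP] /andP[_ yXvP].
have [xX | xnX] := boolP (x \in X); have [yX | ynX] := boolP (y \in X).
- by rewrite cX.
- by move: yXvP; rewrite (negbTE ynX) inE => /forall_inP/(_ x xX) ->; rewrite orbT.
- move: xXuP; rewrite (negbTE xnX) inE => /forall_inP/(_ y yX).
  by rewrite e_sym => ->; rewrite !orbT.
- by move: xXY yXY; rewrite (negbTE xnX) (negbTE ynX) /= => xY yY; rewrite cY.
Qed.

Lemma card_le_from_X (S : {set T}) x :
  x \in S -> x \in X -> #|T| <= c + #|X| + #|nbh link R S|.
Proof.
move=> xS xX.
have cover : [set: T] \subset non_nbh x :|: X :|: nbh link R S.
  apply/subsetP => u _; rewrite !in_setU.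
  have [-> | ux] := eqVneq u x; first by rewrite xX orbT.
  have [exu | nexu] := boolP (e x u); last by rewrite inE ux nexu.
  have [uX | unX] := boolP (u \in X); first by apply/orP; left; apply/orP; right.
  have uR : u \in R.
    rewrite inE in_setU negb_or unX /=; apply: contraTN exu => uY; exact: XY_anti.
  by rewrite (mem_nbh xS uR) ?orbT // /link exu xX.
have := subset_leq_card cover; rewrite cardsT.
have := (leq_card_setU (non_nbh x :|: X) (nbh link R S)).1.
have := (leq_card_setU (non_nbh x) X).1.
have := card_non_nbh_le x; lia.
Qed.

Lemma card_le_from_Y (S : {set T}) y :
  y \in S -> y \in Y -> #|T| <= c + #|Y| + #|nbh link R S| + #|R :\: P|.
Proof.
move=> yS yY.
have cover : [set: T] \subset non_nbh y :|: Y :|: nbh link R S :|: (R :\: P).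
  apply/subsetP => u _; rewrite !in_setU.
  have [-> | uy] := eqVneq u y.
    by apply/orP; left; apply/orP; left; apply/orP; right.
  have [eyu | neyu] := boolP (e y u); last by rewrite inE uy neyu.
  have [uY | unY] := boolP (u \in Y).
    by apply/orP; left; apply/orP; left; apply/orP; right.
  have uR : u \in R.
    rewrite inE in_setU negb_or unY andbT; apply: contraTN eyu => uX.
    by rewrite e_sym; apply: XY_anti.
  have [uP | unP] := boolP (u \in P).
    by rewrite (mem_nbh yS uR) ?orbT // /link eyu uP orbT.
  by rewrite in_setD unP uR !orbT.
have := subset_leq_card cover; rewrite cardsT.
have := (leq_card_setU (non_nbh y :|: Y :|: nbh link R S) (R :\: P)).1.
have := (leq_card_setU (non_nbh y :|: Y) (nbh link R S)).1.
have := (leq_card_setU (non_nbh y) Y).1.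
have := card_non_nbh_le y; lia.
Qed.

Lemma card_not_common_nbh : c < #|X| + #|Y| ->
  #|T| + #|X| <= 2 * c + #|Y| + #|~: (X :|: Y) :\: common_nbh X|.
Proof.
move=> XY_gt; rewrite -/R -/P; have X_le := card_clique_le cX.
have [Y0 Y0Y cardY0] := exists_subset_card (ltac:(lia) : c.+1 - #|X| <= #|Y|).
have dXY0 : [disjoint X & Y0] := disjointWr Y0Y dXY.
have LXY : X :|: Y0 \subset X :|: Y by rewrite setUS.
have cardL : #|X :|: Y0| = c.+1 by rewrite cardsU (disjoint_setI0 dXY0) cards0; lia.
have dLR : [disjoint X :|: Y0 & R] by rewrite disjoints_subset setCK.
have link_e : subrel link e by move=> u w /andP[].
have [S SL defS] := deficient_of_cm_lt dLR link_e
  (sub_in2 (subsetP LXY) link_connected) (ltac:(lia)).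
have [SX0 | [x]] := set_0Vmem (S :&: X); last first.
  rewrite inE => /andP[xS xX]; have := card_le_from_X xS xX.
  by have := subset_leq_card SL; lia.
have SY0 : S \subset Y0.
  apply/subsetP => u uS; have := subsetP SL u uS; rewrite inE => /orP[uX|//].
  have : u \in S :&: X by rewrite inE uS uX.
  by rewrite SX0 inE.
have /card_gt0P[y yS] : 0 < #|S| by apply: leq_ltn_trans defS.
have := card_le_from_Y yS (subsetP Y0Y y (subsetP SY0 y yS)).
have := subset_leq_card SY0; lia.
Qed.

End AnticompleteCliques.

Lemma no_anticomplete_pair X Y :
    [disjoint X & Y] -> {in X & Y, forall x y, ~~ e x y} ->
    #|X| <= c -> #|Y| <= c -> c < #|X| + #|Y| -> False.
Proof.
move=> dXY XY_anti X_le Y_le XY_gt.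
have YX_anti : {in Y & X, forall y x, ~~ e y x}.
  by move=> y x yY xX; rewrite e_sym XY_anti.
have /card_gt0P[x0 x0X] : 0 < #|X| by lia.
have /card_gt0P[y0 y0Y] : 0 < #|Y| by lia.
have cX : clique e X.
  apply: cliqueS (clique_non_nbh (v := y0)); apply/subsetP => x xX.
  rewrite inE YX_anti // andbT.
  by apply: contraTneq xX => ->; rewrite (disjointFl dXY y0Y).
have cY : clique e Y.
  apply: cliqueS (clique_non_nbh (v := x0)); apply/subsetP => y yY.
  rewrite inE XY_anti // andbT.
  by apply: contraTneq yY => ->; rewrite (disjointFr dXY x0X).
have := card_not_common_nbh dXY XY_anti cX cY XY_gt.
have dYX : [disjoint Y & X] by rewrite disjoint_sym.
have := card_not_common_nbh dYX YX_anti cY cX (ltac:(lia)); rewrite setUC.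
have := cardsC (X :|: Y); rewrite cardsU (disjoint_setI0 dXY) cards0.
set R := ~: (X :|: Y).
have dRP : [disjoint R :\: common_nbh X & R :\: common_nbh Y].
  rewrite -setI_eq0; apply/eqP/setP => v; rewrite !inE.
  apply/negbTE/negP.
  case/and3P => /andP[/forall_inPn[x xX nexv] /norP[vnX vnY]] /forall_inPn[y yY neyv] _.
  have xy : x != y by apply: contraTneq yY => <-; rewrite (disjointFr dXY xX).
  have xv : x != v by apply: contraNneq vnX => <-.
  have yv : y != v by apply: contraNneq vnY => <-.
  have := edge_in_triple xy xv yv.
  by rewrite (negbTE (XY_anti x y xX yY)) (negbTE nexv) (negbTE neyv).
have := subset_leq_card (_ : (R :\: common_nbh X) :|: (R :\: common_nbh Y) \subset R).
rewrite cardsU (disjoint_setI0 dRP) cards0 subUset !subsetDl => /(_ isT).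
lia.
Qed.

End IndependenceNumberTwo.

Theorem lemma2p3 (t : nat) (T : finType) (e : rel T) :
  0 < t ->
  simple_graph e ->
  #|T| = 4 * t - 1 ->
  alpha e = 2 ->
  cm e <= t - 1 ->
  forall A B : {set T},
    [disjoint A & B] ->
    #|A| <= #|B| ->
    #|B| = t - 1 ->
    exists M : {set {set T}},
      matching e M /\
      (forall f, f \in M ->
         exists a b, a \in A /\ b \in B /\ f = [set a; b]) /\
      #|M| = #|A|.
Proof.
move=> t_gt0 [e_sym e_irr] card_T alpha2 cm_le A B dAB le_AB card_B.
have [[f mf] | [S SA defS]] := hall_or_deficient e A B.
  exists (map_edges f A); split; first exact: map_edges_matching dAB mf.
  split; last exact: card_map_edges dAB mf.
  by move=> _ /imsetP[x xA ->]; exists x, (f x); have [] := mf.2 x xA.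
have alpha_le2 : alpha e <= 2 by rewrite alpha2.
have card_T' : 4 * (t - 1) + 3 <= #|T| by lia.
exfalso; apply: (no_anticomplete_pair e_sym e_irr alpha_le2 cm_le card_T'
                   (X := S) (Y := B :\: nbh e B S)).
- exact: disjointWl SA (disjointWr (subsetDl _ _) dAB).
- by move=> x y xS; rewrite inE => /andP[yN yB]; apply: contra yN; apply: mem_nbh xS yB.
- by have := subset_leq_card SA; lia.
- by rewrite -card_B subset_leq_card // subsetDl.
- by rewrite cardsDS ?nbh_sub //; lia.
Qed.
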